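(* Every hierarchical probabilistic automaton is leaktight.
   Context: Fix a finite alphabet $A$. A probabilistic automaton is $\mathcal{A}=(Q,q_0,\Delta,F)$ with $Q$ finite, $\Delta:Q\times A\to\mathcal{D}(Q)$. It is hierarchical if there exists a map $\mathrm{rank}:Q\to\mathbb{N}$ such that for all $a\in A$ and states $s,t$ with $\Delta(s,a)(t)>0$ we have $\mathrm{rank}(s)\le\mathrm{rank}(t)$, and moreover if $\Delta(s,a)(t)>0$, $\Delta(s,a)(t')>0$ and $\mathrm{rank}(s)=\mathrm{rank}(t)=\mathrm{rank}(t')$, then $t=t'$. For $a\in A$ let $M_a(s,t)=\Delta(s,a)(t)$, for $u=a_0\cdots a_{n-1}$ let $M_u=M_{a_0}\cdots M_{a_{n-1}}$ (identity for the empty word), and $\mathbb{P}_{\mathcal{A}}(s\xrightarrow{u}t)=M_u(s,t)$. A nonnegative $Q\times Q$ matrix $M$ is idempotent if $M(s,t)>0\iff M^2(s,t)>0$ for all $s,t$; a word $u$ is idempotent if $M_u$ is. A leak is a sequence $(u_n)$ of idempotent words such that $M_{u_n}$ converges to an idempotent matrix $M$ and there exist states $r,q$, both recurrent in the Markov chain with transition matrix $M$, with $\lim_n\mathbb{P}_{\mathcal{A}}(r\xrightarrow{u_n}q)=0$ and $\mathbb{P}_{\mathcal{A}}(r\xrightarrow{u_n}q)>0$ for all $n$. $\mathcal{A}$ is leaktight if it has no leak. *)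

From HB Require Import structures.
From mathcomp Require Import all_boot all_order all_algebra.
From mathcomp Require Import all_classical all_reals topology normedtype sequences.
Set Implicit Arguments. Unset Strict Implicit. Unset Printing Implicit Defensive.
Import Order.TTheory GRing.Theory Num.Theory.
Import numFieldNormedType.Exports.
Local Open Scope classical_set_scope.
Local Open Scope ring_scope.

Record pautomaton (R : realType) (A : finType) (n : nat) := PAutomaton {
  pa_init : 'I_n;
  pa_final : {set 'I_n};
  pa_delta : A -> 'M[R]_n;
  pa_delta_ge0 : forall a s t, 0 <= pa_delta a s t;
  pa_delta_sum1 : forall a s, \sum_(t < n) pa_delta a s t = 1
}.

Definition word_mx (R : realType) (A : finType) (n : nat)
  (P : pautomaton R A n) (u : seq A) : 'M[R]_n :=
  foldr (fun a M => pa_delta P a *m M) 1%:M u.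

Definition hierarchical (R : realType) (A : finType) (n : nat)
  (P : pautomaton R A n) : Prop :=
  exists rank : 'I_n -> nat,
    (forall a s t, 0 < pa_delta P a s t -> (rank s <= rank t)%N) /\
    (forall a s t t', 0 < pa_delta P a s t -> 0 < pa_delta P a s t' ->
       rank s = rank t -> rank s = rank t' -> t = t').

Definition idempotent_mx (R : realType) (n : nat) (M : 'M[R]_n) : Prop :=
  forall s t, (0 < M s t) <-> (0 < (M *m M) s t).

Definition mx_reach (R : realType) (n : nat) (M : 'M[R]_n) : rel 'I_n :=
  connect [rel s t | 0 < M s t].

Definition recurrent (R : realType) (n : nat) (M : 'M[R]_n) (r : 'I_n) : Prop :=
  forall t, mx_reach M r t -> mx_reach M t r.

Definition is_leak (R : realType) (A : finType) (n : nat)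
  (P : pautomaton R A n) (u : nat -> seq A) : Prop :=
  (forall k, idempotent_mx (word_mx P (u k))) /\
  exists M : 'M[R]_n,
    (forall s t, (fun k => word_mx P (u k) s t) @ \oo --> M s t) /\
    idempotent_mx M /\
    exists r q : 'I_n,
      recurrent M r /\ recurrent M q /\
      (fun k => word_mx P (u k) r q) @ \oo --> (0 : R) /\
      (forall k, 0 < word_mx P (u k) r q).

Definition leaktight (R : realType) (A : finType) (n : nat)
  (P : pautomaton R A n) : Prop :=
  ~ exists u : nat -> seq A, is_leak P u.

From HB Require Import structures.
From mathcomp Require Import all_boot all_order all_algebra.
From mathcomp Require Import all_classical all_reals topology normedtype sequences.
Set Implicit Arguments. Unset Strict Implicit. Unset Printing Implicit Defensive.
Import Order.TTheory GRing.Theory Num.Theory.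
Import numFieldNormedType.Exports.
Local Open Scope classical_set_scope.
Local Open Scope ring_scope.

(* Let [d] be the smallest positive transition probability. Reading a word from
   a state [s], the mass that leaves the rank of [s] is either [0] or at least
   [d]: as long as the run stays in rank [rank s] it is deterministic, and the
   first letter allowing a rank increase sends mass at least [d] upward, where
   it stays. Along a leak, the limit matrix gives no weight from the recurrent
   state [r] to higher ranks (they cannot lead back to [r]), so the escape mass
   from [r] eventually vanishes; the run from [r] is then a single deterministic
   path, which gives [P(r -u_k-> q) = 1] since this probability is positive. *)

Lemma mulmx_gt0_witness (R : numDomainType) (m p l : nat)
    (B : 'M[R]_(m, p)) (C : 'M[R]_(p, l)) i j :
  (forall i k, 0 <= B i k) -> (forall k j, 0 <= C k j) ->
  0 < (B *m C) i j -> exists2 k, 0 < B i k & 0 < C k j.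
Proof.
move=> B_ge0 C_ge0; rewrite mxE lt_neqAle eq_sym => /andP[+ _].
rewrite psumr_neq0 => [/hasP[k _ /= BC_gt0]|k _]; last exact: mulr_ge0.
exists k; rewrite lt0r (B_ge0, C_ge0) andbT.
- by apply: contraTneq BC_gt0 => ->; rewrite mul0r ltxx.
- by apply: contraTneq BC_gt0 => ->; rewrite mulr0 ltxx.
Qed.

Lemma sum1_unique_support_dirac (R : numDomainType) (I : finType) (f : I -> R) :
  (forall x, 0 <= f x) -> \sum_x f x = 1 ->
  (forall x y, 0 < f x -> 0 < f y -> x = y) ->
  exists x0, forall x, f x = (x == x0)%:R.
Proof.
move=> f_ge0 f_sum1 f_uniq.
have /hasP[x0 _ /= fx0_gt0] : has (fun x => true && (0 < f x)) (index_enum I).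
  by rewrite -psumr_neq0 // f_sum1 oner_neq0.
have f_off : forall x, x != x0 -> f x = 0.
  move=> x; apply: contraNeq => fx_neq0.
  by apply/eqP/f_uniq => //; rewrite lt0r fx_neq0 f_ge0.
exists x0 => x; have [->|/f_off //] := eqVneq x x0.
by rewrite -f_sum1 (bigD1 x0) //= big1 ?addr0 // => y /f_off.
Qed.

Lemma mx_reach_mono (R : realType) (n : nat) (M : 'M[R]_n) (rk : 'I_n -> nat) :
  (forall s t, 0 < M s t -> (rk s <= rk t)%N) ->
  forall s t, mx_reach M s t -> (rk s <= rk t)%N.
Proof.
move=> M_mono s t /connectP[p]; elim: p s => [|x p IHp] s /=; first by move=> _ ->.
by move=> /andP[sx px] t_last; exact: leq_trans (M_mono _ _ sx) (IHp _ px t_last).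
Qed.

Lemma recurrent_rank_stable (R : realType) (n : nat) (M : 'M[R]_n)
    (rk : 'I_n -> nat) r t :
  (forall s t, 0 <= M s t) -> (forall s t, 0 < M s t -> (rk s <= rk t)%N) ->
  recurrent M r -> (rk r < rk t)%N -> M r t = 0.
Proof.
move=> M_ge0 M_mono r_rec rt; apply/eqP; rewrite eq_le M_ge0 andbT leNgt.
apply/negP => /(@connect1 _ [rel s t | 0 < M s t]) /r_rec.
by move/(mx_reach_mono M_mono); rewrite leqNgt rt.
Qed.

Section WordMatrices.
Variables (R : realType) (A : finType) (n : nat) (P : pautomaton R A n).

Local Notation D := (pa_delta P).
Local Notation W := (word_mx P).

Lemma pa_delta_min_gt0 :
  exists2 d : R, 0 < d & forall a s t, 0 < D a s t -> d <= D a s t.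
Proof.
pose pos (i : A * 'I_n * 'I_n) := 0 < D i.1.1 i.1.2 i.2.
exists (\big[Num.min/1]_(i | pos i) D i.1.1 i.1.2 i.2).
  by apply: (big_ind (fun x : R => 0 < x)) => // x y; rewrite lt_min => -> ->.
by move=> a s t ast; exact: (@bigmin_le_cond _ _ _ _ (a, s, t) pos).
Qed.

Lemma word_mx_ge0 u s t : 0 <= W u s t.
Proof.
elim: u s t => [|a u IHu] s t /=; first by rewrite mxE ler0n.
by rewrite mxE; apply: sumr_ge0 => x _; rewrite mulr_ge0 ?pa_delta_ge0.
Qed.

Lemma word_mx_sum1 u s : \sum_t W u s t = 1.
Proof.
elim: u s => [|a u IHu] s /=.
  by rewrite (bigD1 s) //= big1 ?addr0 => [|t /negbTE ts]; rewrite mxE ?eqxx // eq_sym ts.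
under eq_bigr do rewrite mxE.
rewrite exchange_big /=; under eq_bigr do rewrite -mulr_sumr IHu mulr1.
exact: pa_delta_sum1.
Qed.

Lemma word_mx_cons_gt0 a u s t :
  0 < W (a :: u) s t -> exists2 x, 0 < D a s x & 0 < W u x t.
Proof. by apply: mulmx_gt0_witness; [exact: pa_delta_ge0|exact: word_mx_ge0]. Qed.

Lemma word_mx_nil_gt0 s t : 0 < W [::] s t -> s = t.
Proof. by rewrite /= mxE; case: eqP => // _; rewrite ltxx. Qed.

Lemma lim_word_mx_ge0 (u : nat -> seq A) (M : 'M[R]_n) :
  (forall s t, W (u k) s t @[k --> \oo] --> M s t) -> forall s t, 0 <= M s t.
Proof.
move=> u_cvg s t; apply: cvgr_to_ge (u_cvg s t) _.
by apply: nearW => k; exact: word_mx_ge0.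
Qed.

Section Hierarchical.
Variable rk : 'I_n -> nat.
Hypothesis rk_mono : forall a s t, 0 < D a s t -> (rk s <= rk t)%N.
Hypothesis rk_det : forall a s t t', 0 < D a s t -> 0 < D a s t' ->
  rk s = rk t -> rk s = rk t' -> t = t'.

Lemma word_mx_rank_mono u s t : 0 < W u s t -> (rk s <= rk t)%N.
Proof.
elim: u s => [|a u IHu] s; first by move/word_mx_nil_gt0 ->.
by case/word_mx_cons_gt0 => x /rk_mono sx /IHu; exact: leq_trans.
Qed.

Lemma word_mx_rank_det u s t t' : 0 < W u s t -> 0 < W u s t' ->
  rk s = rk t -> rk s = rk t' -> t = t'.
Proof.
elim: u s => [|a u IHu] s; first by move=> /word_mx_nil_gt0 <- /word_mx_nil_gt0 <-.
move=> /word_mx_cons_gt0[x sx xt] /word_mx_cons_gt0[x' sx' x't] st st'.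
have sx_eq : rk s = rk x.
  by apply/eqP; rewrite eqn_leq (rk_mono sx) st (word_mx_rank_mono xt).
have sx'_eq : rk s = rk x'.
  by apply/eqP; rewrite eqn_leq (rk_mono sx') st' (word_mx_rank_mono x't).
have xx' := rk_det sx sx' sx_eq sx'_eq; subst x'.
by apply: (IHu x) => //; rewrite -sx_eq.
Qed.

Lemma lim_word_mx_rank_mono (u : nat -> seq A) (M : 'M[R]_n) :
  (forall s t, W (u k) s t @[k --> \oo] --> M s t) ->
  forall s t, 0 < M s t -> (rk s <= rk t)%N.
Proof.
move=> u_cvg s t Mst; have [k] := filter_ex (cvgr_gt _ (u_cvg s t) _ Mst).
exact: word_mx_rank_mono.
Qed.

Definition rank_escape (k : nat) u s := \sum_(t | (k < rk t)%N) W u s t.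

Lemma rank_escape_ge0 k u s : 0 <= rank_escape k u s.
Proof. by apply: sumr_ge0 => t _; exact: word_mx_ge0. Qed.

Lemma rank_escape_cons k a u s :
  rank_escape k (a :: u) s = \sum_x D a s x * rank_escape k u x.
Proof.
rewrite /rank_escape /=; under eq_bigr do rewrite mxE.
by rewrite exchange_big /=; apply: eq_bigr => x _; rewrite mulr_sumr.
Qed.

Lemma rank_escape_above k u s : (k < rk s)%N -> rank_escape k u s = 1.
Proof.
move=> ks; rewrite -(word_mx_sum1 u s) [RHS](bigID (fun t => (k < rk t)%N)) /=.
rewrite [X in _ = _ + X]big1 ?addr0 // => t; rewrite -leqNgt => tk.
apply/eqP; rewrite eq_le word_mx_ge0 andbT leNgt; apply: contraL tk => /word_mx_rank_mono.
by rewrite -ltnNge; exact: leq_trans.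
Qed.

Lemma delta_rank_stable_dirac a s :
  (forall x, 0 < D a s x -> rk x = rk s) ->
  exists x0, forall x, D a s x = (x == x0)%:R.
Proof.
move=> stable; apply: sum1_unique_support_dirac.
- exact: pa_delta_ge0.
- exact: pa_delta_sum1.
- by move=> x y sx sy; apply: (rk_det sx sy); rewrite stable.
Qed.

Lemma rank_escape_gap (d : R) :
  (forall a s t, 0 < D a s t -> d <= D a s t) ->
  forall u s, rank_escape (rk s) u s = 0 \/ d <= rank_escape (rk s) u s.
Proof.
move=> d_min; elim=> [|a u IHu] s.
  left; apply: big1 => t st; apply/eqP; rewrite eq_le word_mx_ge0 andbT leNgt.
  by apply: contraL st => /word_mx_nil_gt0 <-; rewrite ltnn.
have term_ge0 x : 0 <= D a s x * rank_escape (rk s) u x.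
  by rewrite mulr_ge0 ?pa_delta_ge0 ?rank_escape_ge0.
rewrite rank_escape_cons.
case: (pickP (fun x => (0 < D a s x) && (rk s < rk x)%N)) => [x /andP[sx up]|stay].
  right; apply: le_trans (d_min _ _ _ sx) _.
  rewrite (bigD1 x) //= rank_escape_above // mulr1 lerDl.
  by apply: sumr_ge0 => y _; exact: term_ge0.
have stable x : 0 < D a s x -> rk x = rk s.
  move=> sx; apply/eqP; rewrite eqn_leq (rk_mono sx) andbT leqNgt.
  by move: (stay x); rewrite sx /= => ->.
have [x0 Dx0] := delta_rank_stable_dirac stable.
rewrite (bigD1 x0) //= big1 => [|x /negbTE x_x0]; last by rewrite Dx0 x_x0 mul0r.
rewrite Dx0 eqxx mul1r addr0 -(stable x0); last by rewrite Dx0 eqxx ltr01.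
exact: IHu.
Qed.

Lemma rank_escape0_word_mx_eq1 u s q :
  rank_escape (rk s) u s = 0 -> 0 < W u s q -> W u s q = 1.
Proof.
move=> esc0 sq.
have stable t : 0 < W u s t -> rk t = rk s.
  move=> st; apply/eqP; rewrite eqn_leq (word_mx_rank_mono st) andbT leqNgt.
  apply: contraTN st => up; rewrite -leNgt (psumr_eq0P _ esc0) //.
  by move=> y _; exact: word_mx_ge0.
have [|x0 Wx0] := sum1_unique_support_dirac (word_mx_ge0 u s) (word_mx_sum1 u s).
  by move=> x y sx sy; apply: (word_mx_rank_det sx sy); rewrite stable.
by move: sq; rewrite !Wx0; case: eqP => //; rewrite ltxx.
Qed.

Lemma rank_escape_lim_recurrent (u : nat -> seq A) (M : 'M[R]_n) r :
  (forall s t, W (u k) s t @[k --> \oo] --> M s t) -> recurrent M r ->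
  rank_escape (rk r) (u k) r @[k --> \oo] --> 0.
Proof.
move=> u_cvg r_rec.
have <- : \sum_(t | (rk r < rk t)%N) M r t = 0.
  apply: big1 => t; apply: recurrent_rank_stable r_rec.
    exact: lim_word_mx_ge0 u_cvg.
  exact: lim_word_mx_rank_mono u_cvg.
by apply: cvg_big => [|t _]; [exact: add_continuous|exact: u_cvg].
Qed.

End Hierarchical.
End WordMatrices.

Theorem proposition5p5 (R : realType) (A : finType) (n : nat)
  (P : pautomaton R A n) :
  hierarchical P -> leaktight P.
Proof.
move=> [rk [rk_mono rk_det]] [u [_ [M [u_cvg [_ [r [q [r_rec [_ [rq_to0 rq_gt0]]]]]]]]]].
have [d d_gt0 d_min] := pa_delta_min_gt0 P.
have esc_to0 := rank_escape_lim_recurrent rk_mono u_cvg r_rec.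
have [k [/= esc_lt rq_lt]] :=
  filter_ex (filterI (cvgr_lt _ esc_to0 _ d_gt0) (cvgr_lt _ rq_to0 _ ltr01)).
have esc0 : rank_escape P rk (rk r) (u k) r = 0.
  have [//|] := rank_escape_gap rk_mono rk_det d_min (u k) r.
  by move/(lt_le_trans esc_lt); rewrite ltxx.
by move: rq_lt; rewrite (rank_escape0_word_mx_eq1 rk_mono rk_det esc0 (rq_gt0 k)) ltxx.
Qed.
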